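(* Let $A=(X,\mathcal M,S,O)$ be a no-signalling empirical theory with $X$ finite, and let $B=(\Omega,\mu,\xi)$ be a factorizable, non-contextual ontological representation of $Op(A)$. Then the family $$d^\sigma(s):=\sum_{\lambda\in\Omega}\Big(\prod_{x\in X}\xi_{\{x\}}(\lambda)(s(x))\Big)\mu_\sigma(\lambda),\qquad s\in O^X,\ \sigma\in S,$$ is a global section of $A$; in particular $A$ is sheaf-theoretically non-contextual, and the canonical ontological representation of $Op(A)$ built from a global section of $A$ realises the same operational theory as $B$, namely $\sum_t\xi^{can}_U(t)(s)\mu^{can}_\sigma(t)=\sum_{\lambda\in\Omega}\xi_U(\lambda)(s)\mu_\sigma(\lambda)$ for all $\sigma$, $U$, $s$.
   Context: Fix a finite outcome set $O$. A system type is a set $X$ of measurement labels with a measurement cover $\mathcal M$ (subsets of $X$ with union $X$, none a proper subset of another); $U\subseteq X$ is jointly measurable if $U\subseteq C$ for some $C\in\mathcal M$. $O^U$ is the set of functions $U\to O$; $e|_U$ is the marginal on $O^U$ of a distribution $e$ on $O^V$, $U\subseteq V$. A state is a family of distributions $\sigma_C$ on $O^C$ ($C\in\mathcal M$), no-signalling if $\sigma_C|_{C\cap C'}=\sigma_{C'}|_{C\cap C'}$, in which case $\sigma_U:=\sigma_C|_U$ for jointly measurable $U\subseteq C$. An empirical theory $A=(X,\mathcal M,S,O)$ has a set $S$ of states; a global section is a family $d^\sigma$ of distributions on $O^X$ with $d^\sigma|_C=\sigma_C$ for all $C,\sigma$. Statistical equivalence: $\sigma\sim\sigma'$ iff $\sigma_C=\sigma'_C\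 \forall C$; $x\sim x'$ iff $\sigma_{\{x\}}=\sigma_{\{x'\}}\ \forall\sigma$. $Op(A)$ is the operational theory with preparations $S$, measurements the nonempty jointly measurable $U\subseteq X$, outcome set $O^U$ for $U$, and $d_{\sigma,U}(s)=\sigma_U(s)$. An ontological representation of an operational theory with preparations $P$, measurements $M$, outcome sets $O^m$ and statistics $d_{p,m}$ is $(\Omega,\mu,\xi)$ with $\Omega$ countable, distributions $\mu_p$ on $\Omega$, $\xi_m(\lambda)$ on $O^m$, satisfying $\sum_\lambda\xi_m(\lambda)(k)\mu_p(\lambda)=d_{p,m}(k)$; it is non-contextual if statistically equivalent preparations ($d_{p,\cdot}=d_{p',\cdot}$) have equal $\mu$ and statistically equivalent outcomes ($d_{\cdot,m}(k)=d_{\cdot,m'}(k')$) have equal $\xi_m(\lambda)(k)=\xi_{m'}(\lambda)(k')$ for all $\lambda$. A representation of $Op(A)$ is factorizable if $\xi_U(\lambda)(s)=\prod_{x\in U}\xi_{\{x\}}(\lambda)(s(x))$. Canonical representation: for a global section $d$ with $d^\sigma(s)=0$ whenever $s(x)\ne s(x')$ for some $x\sim x'$ and $d^\sigma=d^{\sigma'}$ when $\sigma\sim\sigma'$, and $q:X\to X/{\sim}$ the quotient map, it is given by $\Omega^{can}=\{t:X/{\sim}\to O\}$ (restricted to points in some support), $\mu^{can}_\sigma(t)=d^\sigma(t\circ q)$, $\xi^{can}_U(t)(s)=1$ if $s=(t\circ q)|_U$ and $0$ otherwise. *)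

From mathcomp Require Import all_boot.
From Stdlib Require Import Reals ClassicalEpsilon.

Unset Implicit Arguments.
Unset Strict Implicit.
Unset Printing Implicit Defensive.

Section Defs.

Variables (X O : finType).

Definition assign (U : {set X}) : finType := {ffun {x : X | x \in U} -> O}.

Definition fsum {T : finType} (f : T -> R) : R := \big[Rplus/R0]_(t : T) f t.

Definition fdist {T : finType} (e : T -> R) : Prop :=
  (forall t, Rle R0 (e t)) /\ fsum e = R1.

(* Countable (unordered) sum of a nonnegative family over a countable type:
   [psum f l] iff all f t >= 0 and l is the supremum of the finite partial sums. *)
Definition psum {T : countType} (f : T -> R) (l : R) : Prop :=
  (forall t, Rle R0 (f t)) /\
  is_lub (fun r => exists s : seq T, uniq s /\ r = \big[Rplus/R0]_(t <- s) f t) l.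

Definition cdist {T : countType} (m : T -> R) : Prop := psum m R1.

(* s in O^U and t in O^V agree on U ∩ V; for U ⊆ V this says s = t|_U *)
Definition agree (U V : {set X}) (s : assign U) (t : assign V) : bool :=
  [forall u : {x : X | x \in U}, forall v : {x : X | x \in V},
      (val u == val v) ==> (s u == t v)].

(* marginal e|_U of a distribution e on O^V (meaningful for U ⊆ V) *)
Definition marg (U V : {set X}) (e : assign V -> R) (s : assign U) : R :=
  \big[Rplus/R0]_(t : assign V | agree U V s t) e t.

Definition is_cover (M : {set {set X}}) : Prop :=
  \bigcup_(C in M) C = [set: X] /\
  (forall C C', C \in M -> C' \in M -> ~~ (C \proper C')).

Definition jointly_measurable (M : {set {set X}}) (U : {set X}) : bool :=
  [exists C in M, U \subset C].

Definition measurement (M : {set {set X}}) (U : {set X}) : Prop :=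
  U != set0 /\ jointly_measurable M U.

(* states: sigma_C for every C (only C in M is meaningful) *)
Definition state_fam := forall C : {set X}, assign C -> R.

Definition empirical_theory (M : {set {set X}}) (S : Type) (st : S -> state_fam) : Prop :=
  is_cover M /\ forall sg C, C \in M -> fdist (st sg C).

Definition no_signalling (M : {set {set X}}) (S : Type) (st : S -> state_fam) : Prop :=
  forall sg C C', C \in M -> C' \in M ->
    forall s : assign (C :&: C'), marg (C :&: C') C (st sg C) s = marg (C :&: C') C' (st sg C') s.

(* sigma_U := sigma_C|_U for some C in M containing U (well defined under
   no-signalling); this is d_{sigma,U} in Op(A) *)
Definition stU (M : {set {set X}}) (S : Type) (st : S -> state_fam)
  (sg : S) (U : {set X}) (s : assign U) : R :=
  match [pick C in M | U \subset C] with
  | Some C => marg U C (st sg C) s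
  | None => R0
  end.

Definition global_section (M : {set {set X}}) (S : Type) (st : S -> state_fam)
  (d : S -> assign [set: X] -> R) : Prop :=
  forall sg, fdist (d sg) /\
    forall C, C \in M -> forall s : assign C, marg C [set: X] (d sg) s = st sg C s.

Definition sheaf_noncontextual (M : {set {set X}}) (S : Type) (st : S -> state_fam) : Prop :=
  exists d, global_section M S st d.

Definition cst (x : X) (o : O) : assign [set x] := [ffun _ => o].

Definition at_ (s : assign [set: X]) (x : X) : O := s (exist _ x (in_setT x)).

Definition restr (U : {set X}) (s : assign [set: X]) : assign U :=
  [ffun u : {x : X | x \in U} => at_ s (val u)].

Section Ont.
Variables (M : {set {set X}}) (S : Type) (st : S -> state_fam).
Variables (Om : countType) (mu : S -> Om -> R)
          (xi : forall U : {set X}, Om -> assign U -> R).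

Definition ont_rep : Prop :=
  (forall sg, cdist (mu sg)) /\
  (forall U, measurement M U -> forall l, fdist (xi U l)) /\
  (forall sg U, measurement M U -> forall k : assign U,
      psum (fun l => Rmult (xi U l k) (mu sg l)) (stU M S st sg U k)).

Definition ont_noncontextual : Prop :=
  (forall sg sg',
     (forall U, measurement M U -> forall k : assign U,
         stU M S st sg U k = stU M S st sg' U k) ->
     forall l, mu sg l = mu sg' l) /\
  (forall U U' (k : assign U) (k' : assign U'),
     measurement M U -> measurement M U' ->
     (forall sg, stU M S st sg U k = stU M S st sg U' k') ->
     forall l, xi U l k = xi U' l k').

Definition factorizable : Prop :=
  forall U, measurement M U -> forall l (s : assign U),
    xi U l s = \big[Rmult/R1]_(u : {x : X | x \in U}) xi [set val u] l (cst (val u) (s u)).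

Definition dterm (sg : S) (s : assign [set: X]) (l : Om) : R :=
  Rmult (\big[Rmult/R1]_(x : X) xi [set x] l (cst x (at_ s x))) (mu sg l).

End Ont.

Section Canon.
Variables (M : {set {set X}}) (S : Type) (st : S -> state_fam).

Definition state_equiv (sg sg' : S) : Prop :=
  forall C, C \in M -> forall s : assign C, st sg C s = st sg' C s.

Definition label_equiv (x x' : X) : Prop :=
  forall sg (o : O), stU M S st sg [set x] (cst x o) = stU M S st sg [set x'] (cst x' o).

(* boolean version (classical decision) to build the quotient X/~ *)
Definition label_equivb (x x' : X) : bool :=
  if excluded_middle_informative (label_equiv x x') then true else false.

Definition cls (x : X) : {set X} := [set y | label_equivb x y].

(* X/~ as the finite type of equivalence classes *)
Definition Xq : finType := {C : {set X} | [exists x, C == cls x]}.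

Definition qmap (x : X) : Xq :=
  exist _ (cls x) (introT existsP (ex_intro _ x (eqxx (cls x)))).

Definition Omcan : finType := {ffun Xq -> O}.

Definition tq (t : Omcan) : assign [set: X] := [ffun u => t (qmap (val u))].

Definition canonical_ok (d : S -> assign [set: X] -> R) : Prop :=
  (forall sg (s : assign [set: X]) x x',
      label_equiv x x' -> at_ s x != at_ s x' -> d sg s = R0) /\
  (forall sg sg', state_equiv sg sg' -> forall s, d sg s = d sg' s).

Definition mu_can (d : S -> assign [set: X] -> R) (sg : S) (t : Omcan) : R :=
  d sg (tq t).

Definition xi_can (U : {set X}) (t : Omcan) (s : assign U) : R :=
  if s == restr U (tq t) then R1 else R0.

End Canon.

End Defs.

Arguments assign {X O} U.
Arguments agree {X O U V} s t.
Arguments marg {X O U V} e s.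
Arguments is_cover {X} M.
Arguments jointly_measurable {X} M U.
Arguments measurement {X} M U.
Arguments state_fam {X O}.
Arguments empirical_theory {X O} M {S} st.
Arguments no_signalling {X O} M {S} st.
Arguments stU {X O} M {S} st sg U s.
Arguments global_section {X O} M {S} st d.
Arguments sheaf_noncontextual {X O} M {S} st.
Arguments cst {X O} x o.
Arguments at_ {X O} s x.
Arguments restr {X O} U s.
Arguments ont_rep {X O} M {S} st {Om} mu xi.
Arguments ont_noncontextual {X O} M {S} st {Om} mu xi.
Arguments factorizable {X O} M {Om} xi.
Arguments dterm {X O S Om} mu xi sg s l.
Arguments state_equiv {X O} M {S} st sg sg'.
Arguments label_equiv {X O} M {S} st x x'.
Arguments label_equivb {X O} M {S} st x x'.
Arguments cls {X O} M {S} st x.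
Arguments Xq {X O} M {S} st.
Arguments qmap {X O} M {S} st x.
Arguments Omcan {X O} M {S} st.
Arguments tq {X O} M {S} st t.
Arguments canonical_ok {X O} M {S} st d.
Arguments mu_can {X O} M {S} st d sg t.
Arguments xi_can {X O} M {S} st U t s.

From HB Require Import structures.
From mathcomp Require Import all_boot.
From Stdlib Require Import Reals Lra Classical ClassicalEpsilon FunctionalExtensionality.

Set Implicit Arguments.
Unset Strict Implicit.
Unset Printing Implicit Defensive.

(* The summand of d^σ(s) is dominated by μ_σ, since products of the distributions
   ξ_{x}(λ) lie in [0, 1]; so d^σ exists.  Summing out the labels outside a context C,
   whose factors sum to 1, the marginal of d^σ on C is Σ_λ (Π_{x∈C} ξ_{x}(λ)(s x)) μ_σ(λ),
   which factorizability turns into Σ_λ ξ_C(λ)(s) μ_σ(λ) = σ_C(s).  For the canonical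
   representation, Σ_t ξ^can_U(t)(s) μ^can_σ(t) sums d^σ over the ∼-constant global
   assignments restricting to s; since d^σ vanishes on all other assignments this is
   d^σ|_U(s) = σ_U(s), which is also what B realises. *)

HB.instance Definition _ := Monoid.isComLaw.Build R R0 Rplus
  (fun x y z => esym (Rplus_assoc x y z)) Rplus_comm Rplus_0_l.
HB.instance Definition _ := Monoid.isComLaw.Build R R1 Rmult
  (fun x y z => esym (Rmult_assoc x y z)) Rmult_comm Rmult_1_l.
HB.instance Definition _ := Monoid.isMulLaw.Build R R0 Rmult Rmult_0_l Rmult_0_r.
HB.instance Definition _ := Monoid.isAddLaw.Build R Rmult Rplus
  Rmult_plus_distr_r Rmult_plus_distr_l.

Open Scope R_scope.

Lemma sumR_ge0 (I : Type) (r : seq I) (P : pred I) (F : I -> R) :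
  (forall i, P i -> 0 <= F i) -> 0 <= \big[Rplus/R0]_(i <- r | P i) F i.
Proof. by move=> F0; apply: big_ind => // [|x y]; lra. Qed.

Lemma sumR_le (I : Type) (r : seq I) (P : pred I) (F G : I -> R) :
  (forall i, P i -> F i <= G i) ->
  \big[Rplus/R0]_(i <- r | P i) F i <= \big[Rplus/R0]_(i <- r | P i) G i.
Proof. by move=> FG; apply: big_ind2 => // [|x1 x2 y1 y2]; lra. Qed.

Lemma sumR_le_subset (T : eqType) (s1 s : seq T) (f : T -> R) :
  (forall t, 0 <= f t) -> uniq s1 -> uniq s -> {subset s1 <= s} ->
  \big[Rplus/R0]_(t <- s1) f t <= \big[Rplus/R0]_(t <- s) f t.
Proof.
move=> f0 u1 u sub; rewrite [X in _ <= X](bigID (mem s1)) /=.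
have -> : \big[Rplus/R0]_(t <- s | t \in s1) f t = \big[Rplus/R0]_(t <- s1) f t.
  rewrite -big_filter; apply/perm_big/uniq_perm; rewrite ?filter_uniq // => x.
  by rewrite mem_filter andb_idr //; apply: sub.
rewrite -[X in X <= _]Rplus_0_r; apply/Rplus_le_compat_l/sumR_ge0 => t _; exact: f0.
Qed.

Lemma sumR_term_le (I : finType) (F : I -> R) (i : I) :
  (forall j, 0 <= F j) -> F i <= \big[Rplus/R0]_(j : I) F j.
Proof.
move=> F0; rewrite (bigD1 i) //= -[X in X <= _]Rplus_0_r.
by apply/Rplus_le_compat_l/sumR_ge0 => j _.
Qed.

Lemma is_lub_approx (E : R -> Prop) a e :
  is_lub E a -> 0 < e -> exists r, E r /\ a - e < r.
Proof.
move=> [_ lb] e0; apply: NNPP => none.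
have : a <= a - e; last lra.
by apply: lb => r Er; apply: Rnot_lt_le => lt; apply: none; exists r.
Qed.

Section PositiveSums.
Variable T : countType.
Implicit Types (f g : T -> R) (a b : R).

Lemma psum_ge0 f a : psum f a -> 0 <= a.
Proof. by case=> _ [ub _]; apply: ub; exists [::]; rewrite big_nil. Qed.

Lemma psum_unique f a b : psum f a -> psum f b -> a = b.
Proof. by case=> _ [ua la] [_ [ub lb]]; apply: Rle_antisym; [apply: la | apply: lb]. Qed.

Lemma psum_ext f g a : f =1 g -> psum f a -> psum g a.
Proof. by move=> /functional_extensionality ->. Qed.

Lemma psum0 : psum (fun _ : T => 0) 0.
Proof.
split=> [_|]; first exact: Rle_refl.
split=> [r [s [_ ->]]|B ub]; first by rewrite big1 //; apply: Rle_refl.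
by apply: ub; exists [::]; rewrite big_nil.
Qed.

Lemma psum_add f g a b : psum f a -> psum g b -> psum (fun t => f t + g t) (a + b).
Proof.
move=> [f0 [ua la]] [g0 [ub lb]].
split=> [t|]; first by have := f0 t; have := g0 t; lra.
split=> [r [s [us ->]]|B ubB].
  rewrite big_split /=.
  by have := ua _ (ex_intro _ s (conj us erefl)); have := ub _ (ex_intro _ s (conj us erefl)); lra.
apply: Rnot_lt_le => ltB; have e0 : 0 < (a + b - B) / 2 by lra.
have [_ [[s1 [u1 ->]] h1]] := is_lub_approx (conj ua la) e0.
have [_ [[s2 [u2 ->]] h2]] := is_lub_approx (conj ub lb) e0.
(* a finite set containing both near-optimal sets beats B *)
pose s := undup (s1 ++ s2); have us : uniq s := undup_uniq _.
have sub1 : {subset s1 <= s} by move=> x hx; rewrite mem_undup mem_cat hx.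
have sub2 : {subset s2 <= s} by move=> x hx; rewrite mem_undup mem_cat hx orbT.
have : \big[Rplus/R0]_(t <- s1) f t + \big[Rplus/R0]_(t <- s2) g t <= B.
  apply: Rle_trans (ubB _ (ex_intro _ s (conj us erefl))); rewrite big_split.
  by apply: Rplus_le_compat; apply: sumR_le_subset.
lra.
Qed.

Lemma psum_big (I : Type) (r : seq I) (P : pred I) (F : I -> T -> R) (a : I -> R) :
  (forall i, P i -> psum (F i) (a i)) ->
  psum (fun t => \big[Rplus/R0]_(i <- r | P i) F i t) (\big[Rplus/R0]_(i <- r | P i) a i).
Proof.
move=> Fa; elim: r => [|i r IH].
  by rewrite big_nil; apply: psum_ext psum0 => t; rewrite big_nil.
rewrite big_cons; case: ifP => Pi.
  by apply: psum_ext (psum_add (Fa i Pi) IH) => t; rewrite big_cons Pi.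
by apply: psum_ext IH => t; rewrite big_cons Pi.
Qed.

Lemma psum_dominated f g b : (forall t, 0 <= f t <= g t) -> psum g b -> exists a, psum f a.
Proof.
move=> fg [_ [ub _]].
pose E r := exists s : seq T, uniq s /\ r = \big[Rplus/R0]_(t <- s) f t.
have bE : bound E.
  exists b => _ [s [us ->]]; apply: Rle_trans (ub _ (ex_intro _ s (conj us erefl))).
  by apply: sumR_le => t _; have := fg t; lra.
have [a lub_a] := completeness E bE (ex_intro _ 0 (ex_intro _ [::] (conj isT (esym (big_nil _ _ _ _))))).
by exists a; split=> // t; have := fg t; lra.
Qed.

End PositiveSums.

Section Assignments.
Variables (X O : finType).
Notation assign := (@assign X O).
Notation Xall := {x : X | x \in [set: X]}.

Lemma at_val (g : assign [set: X]) (u : Xall) : at_ g (val u) = g u.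
Proof. by rewrite /at_; congr (g _); apply: val_inj. Qed.

Lemma prod_setT (F : X -> R) :
  \big[Rmult/R1]_(x : X) F x = \big[Rmult/R1]_(u : Xall) F (val u).
Proof. by rewrite -(big_sub [set: X]); apply: eq_bigl => x; rewrite in_setT. Qed.

Lemma assign0_eq (s t : assign set0) : s = t.
Proof. by apply/ffunP => u; have := valP u; rewrite in_set0. Qed.

Lemma sum_assign1 (x : X) (F : assign [set x] -> R) :
  \big[Rplus/R0]_(k : assign [set x]) F k = \big[Rplus/R0]_(o : O) F (cst x o).
Proof.
have xx : x \in [set x] by rewrite set11.
rewrite (reindex (cst x)) //; exists (fun k : assign [set x] => k (exist _ x xx)).
  by move=> o _; rewrite ffunE.
move=> k _; apply/ffunP => u; rewrite ffunE; congr (k _); apply: val_inj.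
by have /set1P := valP u.
Qed.

Lemma agree_eq (U : {set X}) (s t : assign U) : agree s t = (t == s).
Proof.
apply/forallP/eqP => [H|->].
  by apply/ffunP => u; have /forallP/(_ u) := H u; rewrite eqxx => /eqP.
by move=> u; apply/forallP => v; apply/implyP => /eqP /val_inj ->.
Qed.

Lemma agree_restr (U : {set X}) (s : assign U) (g : assign [set: X]) :
  agree s g = (s == restr U g).
Proof.
apply/forallP/eqP => [H|->].
  apply/ffunP => u; rewrite ffunE; apply/eqP.
  by have /forallP/(_ (exist _ (val u) (in_setT (val u))))/implyP := H u; apply.
by move=> u; apply/forallP => v; apply/implyP => /eqP e; rewrite ffunE e at_val.
Qed.

Lemma agree_restr_sub (U C : {set X}) (s : assign U) (g : assign [set: X]) :
  U \subset C -> agree s (restr C g) = agree s g.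
Proof.
move=> UC; rewrite agree_restr; apply/forallP/eqP => [H|->].
  apply/ffunP => u; rewrite ffunE.
  have uC : val u \in C by apply: (subsetP UC); exact: valP.
  by have /forallP/(_ (exist _ (val u) uC))/implyP/(_ (eqxx _))/eqP -> := H u; rewrite ffunE.
by move=> u; apply/forallP => v; apply/implyP => /eqP e; rewrite !ffunE e.
Qed.

Lemma marg_marg (U C : {set X}) (e : assign [set: X] -> R) (s : assign U) :
  U \subset C -> marg (marg e : assign C -> R) s = marg e s.
Proof.
move=> UC; rewrite /marg [RHS](partition_big (restr C) (fun c => agree s c)) /=; last first.
  by move=> g; rewrite agree_restr_sub.
apply: eq_bigr => c sc; apply: eq_bigl => g.
rewrite agree_restr; apply/eqP/andP => [E|[_ /eqP <-]] //.
by rewrite -(agree_restr_sub _ _ UC) -E.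
Qed.

Lemma sum_prod_assign (f : X -> O -> R) :
  \big[Rplus/R0]_(g : assign [set: X]) \big[Rmult/R1]_(x : X) f x (at_ g x)
  = \big[Rmult/R1]_(x : X) \big[Rplus/R0]_(o : O) f x o.
Proof.
rewrite prod_setT bigA_distr_bigA /=; apply: eq_bigr => g _.
by rewrite prod_setT; apply: eq_bigr => u _; rewrite at_val.
Qed.

Definition compatible_at (C : {set X}) (s : assign C) (x : X) : pred O :=
  fun o => [forall v : {y : X | y \in C}, (val v == x) ==> (s v == o)].

Lemma prod_compatible (C : {set X}) (s : assign C) (f : X -> O -> R) :
  (forall x, x \notin C -> \big[Rplus/R0]_(o : O) f x o = R1) ->
  \big[Rmult/R1]_(x : X) \big[Rplus/R0]_(o | compatible_at s x o) f x o
  = \big[Rmult/R1]_(u : {x : X | x \in C}) f (val u) (s u).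
Proof.
move=> f1; rewrite (bigID (mem C)) /= [X in Rmult _ X]big1 ?Rmult_1_r; last first.
  move=> x xC; rewrite -(f1 x xC); apply: eq_bigl => o.
  by apply/forallP => v; apply/implyP => /eqP vx; move: xC; rewrite -vx (valP v).
rewrite big_sub; apply: eq_bigr => v _; rewrite (big_pred1 (s v)) // => o.
apply/forallP/eqP => [/(_ v)|->]; first by rewrite eqxx => /eqP.
by move=> w; apply/implyP => /eqP /val_inj ->.
Qed.

Lemma marg_prod (C : {set X}) (s : assign C) (f : X -> O -> R) :
  (forall x, x \notin C -> \big[Rplus/R0]_(o : O) f x o = R1) ->
  marg (fun g : assign [set: X] => \big[Rmult/R1]_(x : X) f x (at_ g x)) s
  = \big[Rmult/R1]_(u : {x : X | x \in C}) f (val u) (s u).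
Proof.
move=> f1; rewrite -prod_compatible // prod_setT.
rewrite (bigA_distr_big_dep (fun u : Xall => compatible_at s (val u))) /=.
apply: eq_big => [g|g _]; last first.
  by rewrite prod_setT; apply: eq_bigr => u _; rewrite at_val.
apply/forallP/familyP => [H u|H v].
  by apply/forallP => v; apply/implyP => /eqP e; have /forallP/(_ u)/implyP := H v; apply; apply/eqP.
by apply/forallP => u; apply/implyP => /eqP e; have /forallP/(_ v)/implyP := H u; apply; apply/eqP.
Qed.

End Assignments.

Section Canonical.
Variables (X O : finType) (M : {set {set X}}) (S : Type) (st : S -> @state_fam X O).
Arguments st : clear implicits.
Notation assign := (@assign X O).
Notation tq := (tq M st).

Lemma stU_context sg C (s : assign C) : is_cover M -> C \in M -> stU M st sg C s = st sg C s.
Proof.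
move=> [_ antichain] CM; rewrite /stU; case: pickP => [C' /andP[C'M CC'] | /(_ C)]; last first.
  by rewrite CM subxx.
have eC : C' = C.
  apply/eqP; rewrite eqEsubset CC' andbT; apply: negbNE.
  by have := antichain _ _ CM C'M; rewrite properE CC'.
subst C'.
by rewrite /marg (big_pred1 s) // => t; rewrite agree_eq.
Qed.

Lemma stU_global_section d sg U (s : assign U) :
  global_section M st d -> jointly_measurable M U -> stU M st sg U s = marg (d sg) s.
Proof.
move=> dgs /existsP[C0 /andP[C0M UC0]]; rewrite /stU.
case: pickP => [C /andP[CM UC] | /(_ C0)]; last by rewrite C0M UC0.
rewrite -(marg_marg _ _ UC); apply: eq_bigr => c _.
by rewrite (proj2 (dgs sg) C CM c).
Qed.

Lemma label_equivbP x y : reflect (label_equiv M st x y) (label_equivb M st x y).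
Proof. by rewrite /label_equivb; case: excluded_middle_informative => h; constructor. Qed.

Lemma qmap_surj (c : Xq M st) : exists x, qmap M st x = c.
Proof. by have /existsP [x /eqP e] := svalP c; exists x; apply: val_inj; rewrite /= e. Qed.

Lemma tq_inj : injective tq.
Proof.
move=> t1 t2 E; apply/ffunP => c; have [x <-] := qmap_surj c.
by have := congr1 (fun g : assign [set: X] => g (exist _ x (in_setT x))) E; rewrite !ffunE.
Qed.

Lemma tq_codom (g : assign [set: X]) :
  (forall x x', label_equiv M st x x' -> at_ g x = at_ g x') -> g \in codom tq.
Proof.
move=> g_const; apply/codomP.
exists [ffun c : Xq M st => at_ g (xchoose (existsP (svalP c)))]; apply/ffunP => u.
rewrite !ffunE; set r := xchoose _.
have /eqP cls_r := xchooseP (existsP (svalP (qmap M st (val u)))); rewrite -/r /= in cls_r.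
have : r \in cls M st r by rewrite inE; apply/label_equivbP => sg o.
by rewrite -cls_r inE => /label_equivbP /g_const <-; rewrite at_val.
Qed.

Lemma canonical_marg (e : assign [set: X] -> R) U (s : assign U) :
  (forall g x x', label_equiv M st x x' -> at_ g x != at_ g x' -> e g = R0) ->
  fsum (fun t : Omcan M st => xi_can M st U t s * e (tq t)) = marg e s.
Proof.
move=> e_const; rewrite /marg big_mkcond (bigID (mem (codom tq))) /=.
rewrite [X in _ = _ + X]big1 ?Rplus_0_r; last first.
  move=> g g_nconst; case: ifP => // _; apply: NNPP => eg; case/negP: g_nconst.
  apply: tq_codom => x x' xx'; apply/eqP/negPn/negP => gxx'; exact: eg (e_const g x x' xx' gxx').
rewrite -big_uniq; last by rewrite (map_inj_uniq tq_inj) enum_uniq.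
rewrite big_image /fsum; apply: eq_bigr => t _.
by rewrite /xi_can agree_restr; case: ifP => _; rewrite ?Rmult_1_l ?Rmult_0_l.
Qed.

End Canonical.

Section FactorizableRepresentation.
Variables (X O : finType) (M : {set {set X}}) (S : Type) (st : S -> @state_fam X O).
Variables (Om : countType) (mu : S -> Om -> R) (xi : forall U : {set X}, Om -> @assign X O U -> R).
Arguments st : clear implicits.
Arguments xi : clear implicits.
Notation assign := (@assign X O).

Hypothesis cover : is_cover M.
Hypothesis st_dist : forall sg C, C \in M -> fdist (st sg C).
Hypothesis mu_dist : forall sg, cdist (mu sg).
Hypothesis xi_dist : forall U, measurement M U -> forall l, fdist (xi U l).
Hypothesis rep : forall sg U, measurement M U -> forall k : assign U,
  psum (fun l => xi U l k * mu sg l) (stU M st sg U k).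
Hypothesis fact : factorizable M xi.

Lemma measurement_set1 x : measurement M [set x].
Proof.
split; first by apply/set0Pn; exists x; rewrite set11.
have : x \in \bigcup_(C in M) C by rewrite cover.1 in_setT.
by case/bigcupP => C CM xC; apply/existsP; exists C; rewrite CM sub1set.
Qed.

Lemma sum_xi1 l x : \big[Rplus/R0]_(o : O) xi [set x] l (cst x o) = 1.
Proof. by rewrite -sum_assign1; case: (xi_dist (measurement_set1 x) l). Qed.

Lemma prod_xi1_bounds l (g : assign [set: X]) :
  0 <= \big[Rmult/R1]_(x : X) xi [set x] l (cst x (at_ g x)) <= 1.
Proof.
apply: (big_ind (fun y => 0 <= y <= 1)) => [|a b ha hb|x _]; first lra.
  split; first by apply: Rmult_le_pos; lra.
  by rewrite -(Rmult_1_l 1); apply: Rmult_le_compat; lra.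
have [xi0 _] := xi_dist (measurement_set1 x) l; split=> //.
by rewrite -(sum_xi1 l x); apply: sumR_term_le => o.
Qed.

Lemma dterm_summable sg g : exists a, psum (dterm mu xi sg g) a.
Proof.
apply: (psum_dominated _ (mu_dist sg)) => l; rewrite /dterm.
have [mu0 _] := mu_dist sg; have := mu0 l; have := prod_xi1_bounds l g => bnd mu0l.
split; first by apply: Rmult_le_pos; lra.
by rewrite -[X in _ <= X]Rmult_1_l; apply: Rmult_le_compat_r; lra.
Qed.

Definition dsec sg g : R := proj1_sig (constructive_indefinite_description _ (dterm_summable sg g)).

Lemma dsec_psum sg g : psum (dterm mu xi sg g) (dsec sg g).
Proof. exact: proj2_sig (constructive_indefinite_description _ _). Qed.

Lemma marg_dsec_psum sg C (s : assign C) :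
  psum (fun l => (\big[Rmult/R1]_(u : {x : X | x \in C}) xi [set val u] l (cst (val u) (s u))) * mu sg l)
       (marg (dsec sg) s).
Proof.
apply: psum_ext (psum_big _ (fun g _ => dsec_psum sg g)) => l.
rewrite /dterm -big_distrl /=; congr Rmult.
by apply: (@marg_prod _ _ _ s (fun x o => xi [set x] l (cst x o))) => x _; apply: sum_xi1.
Qed.

Lemma dsec_fdist sg : fdist (dsec sg).
Proof.
split=> [g|]; first exact: psum_ge0 (dsec_psum sg g).
apply: psum_unique (psum_big _ (fun g _ => dsec_psum sg g)) _.
apply: psum_ext (mu_dist sg) => l; rewrite /dterm -big_distrl /=.
by rewrite (sum_prod_assign (fun x o => xi [set x] l (cst x o))) big1 ?Rmult_1_l // => x _; apply: sum_xi1.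
Qed.

Lemma dsec_marg sg C (s : assign C) : C \in M -> marg (dsec sg) s = st sg C s.
Proof.
move=> CM; have margP := marg_dsec_psum sg s.
have [C0 | C0] := eqVneq C set0.
  subst C.
  (* the empty context is no measurement of Op(A); there both sides are the total mass 1 *)
  have -> : marg (dsec sg) s = R1.
    apply: psum_unique margP (psum_ext _ (mu_dist sg)) => l.
    by rewrite big1 ?Rmult_1_l // => u; have := valP u; rewrite in_set0.
  have [_ <-] := st_dist sg CM.
  by rewrite /fsum (big_pred1 s) // => t; symmetry; apply/eqP; apply: assign0_eq.
have mC : measurement M C by split=> //; apply/existsP; exists C; rewrite CM subxx.
rewrite -(stU_context _ _ s cover CM); apply: psum_unique margP _.
by apply: psum_ext (rep sg mC s) => l; rewrite (fact mC l s).
Qed.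

Lemma dsec_global_section : global_section M st dsec.
Proof. by move=> sg; split=> [|C CM s]; [exact: dsec_fdist | exact: dsec_marg]. Qed.

End FactorizableRepresentation.

Theorem mainTheorem6
  (X O : finType) (M : {set {set X}}) (S : Type) (st : S -> @state_fam X O)
  (Om : countType) (mu : S -> Om -> R)
  (xi : forall U : {set X}, Om -> @assign X O U -> R) :
  empirical_theory M st ->
  no_signalling M st ->
  ont_rep M st mu xi ->
  factorizable M xi ->
  ont_noncontextual M st mu xi ->
  (exists d : S -> @assign X O [set: X] -> R,
      (forall sg s, psum (dterm mu xi sg s) (d sg s)) /\
      global_section M st d) /\
  sheaf_noncontextual M st /\
  (forall d : S -> @assign X O [set: X] -> R,
      global_section M st d -> canonical_ok M st d ->
      forall sg (U : {set X}) (s : @assign X O U), measurement M U ->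
        psum (fun l => Rmult (xi U l s) (mu sg l))
             (fsum (fun t : Omcan M st => Rmult (xi_can M st U t s) (mu_can M st d sg t)))).
Proof.
move=> [cover st_dist] _ [mu_dist [xi_dist rep]] fact _.
have dsec_gs := dsec_global_section cover st_dist mu_dist xi_dist rep fact.
split; first by exists (dsec cover mu_dist xi_dist); split=> // sg; apply: dsec_psum.
split; first by exists (dsec cover mu_dist xi_dist).
move=> d d_gs [d_const _] sg U s mU.
rewrite (canonical_marg s (d_const sg)) -(stU_global_section sg s d_gs mU.2).
exact: rep.
Qed.
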